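(* Let $\gamma>0$ and let $k:\mathbb R_+\to\mathbb R_+$ be a $C^\infty$ function with $k(0)=\gamma$, $k'(x)>0$ for all $x\ge0$, and $k(x)\to+\infty$ as $x\to+\infty$. Define, for $x\ge0$, $$\Psi(x)=\int_0^x k(u)(e^{\gamma u}-1)\,du,$$ let $\Phi'$ be the inverse function of $\Psi':[0,\infty)\to[0,\infty)$ and $\Phi(x)=\int_0^x\Phi'(u)\,du$ (the convex dual of $\Psi$). Let $$\Phi_0(x)=\Big(\frac{x}{\gamma}+1\Big)\ln\Big(\frac{x}{\gamma}+1\Big)-\frac{x}{\gamma}$$ (the convex dual of $\Psi_0(x)=e^{\gamma x}-\gamma x-1$) and $\Lambda=\Phi_0-\Phi$. Then $$\lim_{x\to+\infty}\frac{\Lambda(x)}{x}=+\infty.$$ *)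

From Stdlib Require Import Reals.
Open Scope R_scope.

Definition deriv_nonneg (f : R -> R) (x l : R) : Prop :=
  limit1_in (fun y => (f y - f x) / (y - x)) (fun y => 0 <= y /\ y <> x) l x.

Definition smooth_nonneg (f : R -> R) : Prop :=
  exists D : nat -> R -> R,
    (forall x, 0 <= x -> D O x = f x) /\
    (forall n x, 0 <= x -> deriv_nonneg (D n) x (D (S n) x)).

(* Psi'(x) = k(x) (e^{gamma x} - 1), derivative of Psi(x) = int_0^x k(u)(e^{gamma u}-1) du *)
Definition dPsi (gamma : R) (k : R -> R) (x : R) : R := k x * (exp (gamma * x) - 1).

Definition Phi0 (gamma x : R) : R :=
  (x / gamma + 1) * ln (x / gamma + 1) - x / gamma.

(* Write t = x / gamma.  Since k tends to +oo, for any level K > 0 there is an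
   N with k >= K on [N, +oo).  Beyond that point Psi' (y) >= K (e^{gamma y} - 1),
   so the inverse function Phi' is logarithmically small:
       gamma * Phi'(u) <= ln (x / K + 1)   for 0 <= u <= x, x large.
   Integrating, Phi x <= t ln (x / K + 1).  On the other hand
   Phi0 x >= t (ln (t + 1) - 1).  Choosing K = 2 gamma e^{gamma M + 1} makes
   ln (t + 1) exceed ln (x / K + 1) by at least gamma M + 1 for large x, whence
   Lambda x >= t * gamma * M = M x. *)

From Stdlib Require Import Reals Lra.
Open Scope R_scope.

Lemma ln_le (a b : R) : 0 < a -> a <= b -> ln a <= ln b.
Proof.
  intros Ha [Hab | ->]; [left; apply ln_increasing | right]; lra.
Qed.

Lemma le_ln_of_exp_le (a b : R) : exp a <= b -> a <= ln b.
Proof.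
  intros H. rewrite <- (ln_exp a). apply ln_le; [apply exp_pos | exact H].
Qed.

Lemma le_div_of_mul_le (g a b : R) : 0 < g -> g * a <= b -> a <= b / g.
Proof.
  intros Hg H. apply (Rmult_le_reg_l g); [exact Hg|].
  replace (g * (b / g)) with b by (field; lra). exact H.
Qed.

(* If k >= K beyond N, every y >= 0 with Psi'(y) <= x satisfies
   gamma y <= ln (x / K + 1), provided x >= K (e^{gamma N} - 1); the latter
   covers the points y < N, where nothing is known about k. *)
Lemma dPsi_preimage_log_bound (gamma K N x y : R) (k : R -> R) :
  0 < gamma -> 0 < K -> 0 <= y ->
  (forall z, N <= z -> K <= k z) ->
  K * (exp (gamma * N) - 1) <= x ->
  dPsi gamma k y <= x ->
  gamma * y <= ln (x / K + 1).
Proof.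
  unfold dPsi. intros Hg HK Hy HkN Hx Hpsi.
  apply le_ln_of_exp_le.
  assert (Hdiv : forall e, K * (e - 1) <= x -> e <= x / K + 1).
  { intros e He. enough (e - 1 <= x / K) by lra. apply le_div_of_mul_le; lra. }
  apply Hdiv. destruct (Rlt_or_le y N) as [HyN | HNy].
  - assert (exp (gamma * y) < exp (gamma * N)) by (apply exp_increasing; nra).
    nra.
  - assert (Hky : K <= k y) by (apply HkN; exact HNy).
    assert (Hexp1 : 1 <= exp (gamma * y)).
    { pose proof (exp_ineq1_le (gamma * y)). nra. }
    nra.
Qed.

Lemma RiemannInt_le_const (f : R -> R) (a b c : R) (pr : Riemann_integrable f a b) :
  a <= b -> (forall u, a < u < b -> f u <= c) -> RiemannInt pr <= c * (b - a).
Proof.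
  intros Hab Hf. rewrite <- (RiemannInt_P15 (RiemannInt_P14 a b c)).
  apply RiemannInt_P19; [exact Hab | exact Hf].
Qed.

Lemma Phi_log_bound (gamma K N x : R) (k dPhi Phi : R -> R) :
  0 < gamma -> 0 < K -> 0 <= x ->
  (forall z, N <= z -> K <= k z) ->
  (forall u, 0 <= u -> 0 <= dPhi u /\ dPsi gamma k (dPhi u) = u) ->
  (forall u, 0 <= u -> exists pr : Riemann_integrable dPhi 0 u, RiemannInt pr = Phi u) ->
  K * (exp (gamma * N) - 1) <= x ->
  Phi x <= x / gamma * ln (x / K + 1).
Proof.
  intros Hg HK Hx HkN HdPhi HPhi Hthr.
  destruct (HPhi x Hx) as [pr <-].
  replace (x / gamma * ln (x / K + 1)) with (ln (x / K + 1) / gamma * (x - 0))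
    by (field; lra).
  apply RiemannInt_le_const; [exact Hx|].
  intros u Hu. destruct (HdPhi u ltac:(lra)) as [Hy Hinv].
  apply le_div_of_mul_le; [exact Hg|].
  apply (dPsi_preimage_log_bound gamma K N x (dPhi u) k); auto; lra.
Qed.

Lemma Phi0_lower_bound (gamma x : R) :
  0 < gamma -> 0 <= x ->
  x / gamma * (ln (x / gamma + 1) - 1) <= Phi0 gamma x.
Proof.
  intros Hg Hx. unfold Phi0.
  assert (Ht : 0 <= x / gamma) by (unfold Rdiv; apply Rmult_le_pos;
    [exact Hx | left; apply Rinv_0_lt_compat; exact Hg]).
  assert (Hln : 0 <= ln (x / gamma + 1)) by (rewrite <- ln_1; apply ln_le; lra).
  nra.
Qed.

Lemma ln_rescale_gain (gamma E x : R) :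
  0 < gamma -> 0 < E -> 2 * gamma * E <= x ->
  ln E + ln (x / (2 * gamma * E) + 1) <= ln (x / gamma + 1).
Proof.
  intros Hg HE Hx.
  assert (Hpos : 0 < x / (2 * gamma * E)) by (apply Rdiv_lt_0_compat; nra).
  rewrite <- ln_mult by lra. apply ln_le; [nra|].
  assert (Hhalf : E <= x / (2 * gamma)) by (apply le_div_of_mul_le; lra).
  replace (E * (x / (2 * gamma * E) + 1)) with (x / (2 * gamma) + E) by (field; lra).
  replace (x / gamma) with (2 * (x / (2 * gamma))) by (field; lra).
  lra.
Qed.

Theorem proposition3p3
  (gamma : R) (k : R -> R) (dPhi Phi : R -> R)
  (hgamma : 0 < gamma)
  (hk_pos : forall x, 0 <= x -> 0 <= k x)
  (hk_smooth : smooth_nonneg k)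
  (hk0 : k 0 = gamma)
  (hk_deriv : forall x, 0 <= x -> exists l, deriv_nonneg k x l /\ 0 < l)
  (hk_infty : forall M, exists N, forall x, N <= x -> M <= k x)
  (hdPhi : forall x, 0 <= x -> 0 <= dPhi x /\ dPsi gamma k (dPhi x) = x)
  (hPhi : forall x, 0 <= x ->
            exists pr : Riemann_integrable dPhi 0 x, RiemannInt pr = Phi x) :
  forall M, exists N, forall x, N <= x -> M <= (Phi0 gamma x - Phi x) / x.
Proof.
  intros M.
  set (E := exp (gamma * M + 1)).
  assert (HE : 0 < E) by apply exp_pos.
  set (K := 2 * gamma * E).
  assert (HK : 0 < K) by (unfold K; nra).
  destruct (hk_infty K) as [N HkN].
  exists (Rmax K (K * (exp (gamma * N) - 1))).
  intros x Hx.
  pose proof (Rle_trans _ _ _ (Rmax_l _ _) Hx) as HxK.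
  pose proof (Rle_trans _ _ _ (Rmax_r _ _) Hx) as Hthr.
  pose proof (Phi_log_bound gamma K N x k dPhi Phi hgamma HK ltac:(lra) HkN hdPhi hPhi Hthr)
    as HPhi_le.
  pose proof (Phi0_lower_bound gamma x hgamma ltac:(lra)) as HPhi0_ge.
  pose proof (ln_rescale_gain gamma E x hgamma HE HxK) as Hgain.
  unfold E in Hgain at 1. rewrite ln_exp in Hgain. fold K in Hgain.
  assert (Ht : 0 <= x / gamma) by (apply Rlt_le, Rdiv_lt_0_compat; lra).
  assert (Hlambda : x / gamma * (gamma * M) <= Phi0 gamma x - Phi x) by nra.
  replace (x / gamma * (gamma * M)) with (x * M) in Hlambda by (field; lra).
  apply le_div_of_mul_le; lra.
Qed.
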